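(* For every integer $n\ge 4$, $px_{n-1,2}(K_n)=2$.
   Context: All graphs are finite, simple and undirected. An edge-coloring of a graph may assign the same color to adjacent edges. A tree $T$ in an edge-colored graph is a proper tree if no two adjacent edges of $T$ receive the same color. For $S\subseteq V(G)$ with $|S|\ge 2$, an $S$-tree is a tree in $G$ containing all vertices of $S$. $S$-trees $T_1,\dots,T_\ell$ are internally disjoint if $E(T_i)\cap E(T_j)=\emptyset$ and $V(T_i)\cap V(T_j)=S$ for all $i\ne j$. For a connected graph $G$ of order $n$ and integers $k,\ell$ with $2\le k\le n$ and $1\le \ell\le \kappa_k(G)$ (where $\kappa_k(G)$ is the minimum, over all $k$-subsets $S$ of $V(G)$, of the maximum number of internally disjoint $S$-trees), the $(k,\ell)$-proper index $px_{k,\ell}(G)$ is the minimum number of colors in an edge-coloring of $G$ such that for every $k$-subset $S$ of $V(G)$ there exist $\ell$ internally disjoint proper $S$-trees. *)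

From mathcomp Require Import all_boot.
Set Implicit Arguments. Unset Strict Implicit. Unset Printing Implicit Defensive.

(* A finite simple graph on vertex type T is given by a symmetric irreflexive
   adjacency relation adj.  Edges are 2-element vertex sets {x,y} with adj x y. *)
Definition is_edge (T : finType) (adj : rel T) (E : {set T}) : bool :=
  [exists x, exists y, adj x y && (E == [set x; y])].

Definition Kadj (n : nat) : rel 'I_n := fun x y => x != y.

Definition subgraph (T : finType) := ({set T} * {set {set T}})%type.

Definition F_connect (T : finType) (F : {set {set T}}) (x y : T) : bool :=
  connect (fun a b => [set a; b] \in F) x y.

(* H = (V,F) is a tree of G: nonempty, every edge of F is an edge of G with
   both ends in V, H is connected, and H is acyclic (every edge of F is a
   bridge: deleting it disconnects its two endpoints). *)
Definition is_tree (T : finType) (adj : rel T) (H : subgraph T) : Prop :=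
  let: (V, F) := H in
  [/\ V != set0,
      (forall E, E \in F -> is_edge adj E && (E \subset V)),
      (forall x y, x \in V -> y \in V -> F_connect F x y) &
      (forall x y, [set x; y] \in F -> x != y -> ~~ F_connect (F :\ [set x; y]) x y)].

(* An edge-colouring with m colours (adjacent edges may share colours). *)
Definition coloring (T : finType) (m : nat) := {set T} -> 'I_m.

Definition is_proper_tree (T : finType) (adj : rel T) (m : nat) (c : coloring T m)
    (H : subgraph T) : Prop :=
  is_tree adj H /\
  (forall E1 E2, E1 \in H.2 -> E2 \in H.2 -> E1 != E2 -> E1 :&: E2 != set0 ->
     c E1 != c E2).

Definition is_S_tree (T : finType) (adj : rel T) (S : {set T}) (H : subgraph T) : Prop :=
  is_tree adj H /\ S \subset H.1.

Definition int_disjoint (T : finType) (S : {set T}) (l : nat) (Ts : 'I_l -> subgraph T) : Prop :=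
  forall i j, i != j -> (Ts i).2 :&: (Ts j).2 = set0 /\ (Ts i).1 :&: (Ts j).1 = S.

Definition kl_proper (T : finType) (adj : rel T) (k l m : nat) (c : coloring T m) : Prop :=
  forall S : {set T}, #|S| = k ->
    exists Ts : 'I_l -> subgraph T,
      (forall i, is_S_tree adj S (Ts i) /\ is_proper_tree adj c (Ts i)) /\
      int_disjoint S Ts.

Definition px_is (T : finType) (adj : rel T) (k l p : nat) : Prop :=
  (exists c : coloring T p, kl_proper adj k l c) /\
  (forall m (c : coloring T m), kl_proper adj k l c -> p <= m).

From mathcomp Require Import all_boot zify.
Set Implicit Arguments. Unset Strict Implicit. Unset Printing Implicit Defensive.

(* With a single colour, adjacent edges of a proper tree are impossible, so a proper tree has
   at most two vertices, whereas an (n-1)-subset of K_n has at least three: two colours are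
   needed.

   Conversely, let N be the largest even number at most n and view 0, ..., N-1 as Z_N.  The
   zigzag a, a+1, a-1, a+2, a-2, ... is a Hamiltonian path of Z_N whose consecutive edges have
   endpoint sums alternately 2a+1 and 2a modulo N.  Colour an edge by the parity of its
   endpoint sum (well defined modulo the even N): every zigzag is then properly coloured, and
   the zigzags from a and a+1 share no edge, since their sums lie in the disjoint residue pairs
   {2a, 2a+1} and {2a+2, 2a+3} (N >= 4).  For S = V - {v} take the zigzag from v with v
   removed and the zigzag from v+1.  When n is odd, the remaining vertex N gets colour 0 on all
   its edges and is attached at the ends of the two zigzags, where their edges have colour 1;
   if v = N itself, the zigzags from 0 and 1 already do. *)

Section PathGraph.
Variable T : finType.
Implicit Types (adj : rel T) (x y : T) (s : seq T) (F : {set {set T}}).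

Definition path_edges x s : seq {set T} := pairmap (fun a b => [set a; b]) x s.

Definition path_graph x s : subgraph T := ([set z in x :: s], [set E in path_edges x s]).

Lemma edge_connect_sym F : connect_sym (fun a b => [set a; b] \in F).
Proof. by apply: sym_connect_sym => a b; rewrite setUC. Qed.

Lemma path_edges_map_iota (f : nat -> T) k len :
  path_edges (f k) (map f (iota k.+1 len)) = [seq [set f t; f t.+1] | t <- iota k len].
Proof. by elim: len k => //= len IH k; rewrite -IH. Qed.

Lemma mem_path_edges x s E : E \in path_edges x s ->
  exists s1 y s2, s = s1 ++ y :: s2 /\ E = [set last x s1; y].
Proof.
elim: s x => [|y s IH] x //=; rewrite in_cons => /predU1P [->|]; first by exists [::], y, s.
by case/IH => s1 [z [s2 [-> ->]]]; exists (y :: s1), z, s2.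
Qed.

Lemma path_edges_sub x s E z : E \in path_edges x s -> z \in E -> z \in x :: s.
Proof.
case/mem_path_edges => s1 [y [s2 [-> ->]]] /set2P [] ->; rewrite -cat_cons mem_cat.
  by rewrite mem_last.
by rewrite mem_head orbT.
Qed.

Lemma head_path_edge y s E : uniq (y :: s) -> E \in path_edges y s -> y \in E ->
  exists z s', s = z :: s' /\ E = [set y; z].
Proof.
case: s => [|z s] //= /andP [y_notin _]; rewrite in_cons => /predU1P [->|E_in y_in].
  by exists z, s.
by move: y_notin; rewrite (path_edges_sub E_in y_in).
Qed.

Lemma path_graph_connect x s u :
  u \in x :: s -> F_connect [set E in path_edges x s] x u.
Proof.
elim: s x u => [|y s IH] x u; first by rewrite inE => /eqP ->; apply: connect0.
rewrite in_cons => /predU1P [->|u_in]; first exact: connect0.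
apply: (@connect_trans _ _ y); first by apply: connect1; rewrite inE mem_head.
apply: connect_sub (IH y u u_in) => a b ab; apply: connect1.
by move: ab; rewrite !inE /= => ->; rewrite orbT.
Qed.

Lemma path_edge_bridge x s a b :
  uniq (x :: s) -> [set a; b] \in path_edges x s -> a != b ->
  ~~ F_connect ([set E in path_edges x s] :\ [set a; b]) a b.
Proof.
move=> xs_uniq ab_in neq_ab; apply/negP => conn_ab.
have [s1 [y [s2 [def_s def_ab]]]] := mem_path_edges ab_in.
have := xs_uniq; rewrite def_s -cat_cons cat_uniq => /and3P [_ disj _].
have closed_s1 : closed (fun u w => [set u; w] \in [set E in path_edges x s] :\ [set a; b])
    [pred z | z \in x :: s1].
  apply: intro_closed; first exact: edge_connect_sym.
  move=> u w; rewrite !inE /path_edges def_s pairmap_cat /= mem_cat in_cons.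
  case/andP => neq_uw /or3P [uw_in _ | /eqP eq_uw | uw_in u_in].
  - exact: path_edges_sub uw_in (set22 u w).
  - by rewrite eq_uw def_ab eqxx in neq_uw.
  - case/hasP: disj; exists u => //; exact: path_edges_sub uw_in (set21 u w).
have same_side : (a \in x :: s1) = (b \in x :: s1) := closed_connect closed_s1 conn_ab.
have last_in : last x s1 \in x :: s1 := mem_last x s1.
have y_notin : y \notin x :: s1.
  by apply: contra disj => y_in; apply/hasP; exists y; rewrite ?mem_head.
have : (a \in [set last x s1; y]) && (b \in [set last x s1; y]) by rewrite -def_ab set21 set22.
case/andP => /set2P [] ea /set2P [] eb; rewrite ea eb ?eqxx // in neq_ab same_side;
  by rewrite last_in (negbTE y_notin) in same_side.
Qed.

Lemma path_graph_tree adj x s :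
  uniq (x :: s) -> path adj x s -> is_tree adj (path_graph x s).
Proof.
move=> xs_uniq xs_path; split.
- by apply/set0Pn; exists x; rewrite inE mem_head.
- move=> E; rewrite inE => E_in; apply/andP; split.
    have [s1 [y [s2 [def_s ->]]]] := mem_path_edges E_in.
    apply/existsP; exists (last x s1); apply/existsP; exists y; rewrite eqxx andbT.
    by move: xs_path; rewrite def_s cat_path /= => /and3P [].
  by apply/subsetP => z /(path_edges_sub E_in); rewrite inE.
- move=> a b; rewrite !inE => a_in b_in.
  have := path_graph_connect a_in; rewrite /F_connect edge_connect_sym => conn_a.
  exact: connect_trans conn_a (path_graph_connect b_in).
by move=> a b; rewrite inE; apply: path_edge_bridge.
Qed.

Lemma path_edges_proper m (c : coloring T m) x s :
  uniq (x :: s) -> sorted [rel E F | c E != c F] (path_edges x s) ->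
  forall E1 E2, E1 \in path_edges x s -> E2 \in path_edges x s -> E1 != E2 ->
    E1 :&: E2 != set0 -> c E1 != c E2.
Proof.
elim: s x => [|y s IH] x //= /andP [x_notin ys_uniq] alt_xys.
have first_edge E : E \in path_edges y s -> [set x; y] :&: E != set0 -> c [set x; y] != c E.
  move=> E_in /set0Pn [w]; rewrite !inE => /andP [/orP [] /eqP -> w_in].
    by move: x_notin; rewrite (path_edges_sub E_in w_in).
  have [z [s' [def_s ->]]] := head_path_edge ys_uniq E_in w_in.
  by move: alt_xys; rewrite def_s /= => /andP [].
move=> E1 E2; rewrite !in_cons => /predU1P [-> | E1_in] /predU1P [-> | E2_in] neq meet.
- by rewrite eqxx in neq.
- exact: first_edge.
- by rewrite eq_sym first_edge // setIC.
- exact: IH ys_uniq (path_sorted alt_xys) _ _ E1_in E2_in neq meet.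
Qed.

Lemma path_graph_proper_tree adj m (c : coloring T m) x s :
  uniq (x :: s) -> path adj x s -> sorted [rel E F | c E != c F] (path_edges x s) ->
  is_proper_tree adj c (path_graph x s).
Proof.
move=> xs_uniq xs_path xs_alt; split; first exact: path_graph_tree.
by move=> E1 E2; rewrite !inE; apply: path_edges_proper.
Qed.

Lemma uniq_path_neq x s : uniq (x :: s) -> path (fun a b : T => a != b) x s.
Proof.
elim: s x => //= y s IH x; rewrite in_cons negb_or => /andP [/andP [-> _] ys_uniq].
exact: IH.
Qed.

End PathGraph.

Definition two_proper_S_trees (T : finType) (adj : rel T) (c : coloring T 2) (S : {set T}) :=
  exists Ts : 'I_2 -> subgraph T,
    (forall i, is_S_tree adj S (Ts i) /\ is_proper_tree adj c (Ts i)) /\ int_disjoint S Ts.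

Lemma two_proper_S_trees_intro (T : finType) (adj : rel T) (c : coloring T 2) (S : {set T})
    (H1 H2 : subgraph T) :
  is_proper_tree adj c H1 -> is_proper_tree adj c H2 ->
  H1.2 :&: H2.2 = set0 -> H1.1 :&: H2.1 = S -> two_proper_S_trees adj c S.
Proof.
move=> H1_ok H2_ok disjE defS.
exists (fun i : 'I_2 => if i == ord0 then H1 else H2); split.
  have [[H1_tree _] [H2_tree _]] := (H1_ok, H2_ok).
  by move=> i; case: ifP => _; split => //; split => //; rewrite -defS ?subsetIl ?subsetIr.
move=> [[|[|i]] lt_i2] [[|[|j]] lt_j2] //= _; rewrite ?(setIC H2.2) ?(setIC H2.1) //.
Qed.

Definition bcol (b : bool) : 'I_2 := @Ordinal 2 b (leq_b1 b).

Lemma bcol_eq b1 b2 : (bcol b1 == bcol b2) = (b1 == b2).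
Proof. by case: b1; case: b2. Qed.

Lemma sorted_iota_odd k len : sorted [rel t u | odd t != odd u] (iota k len).
Proof.
case: len => //= len; elim: len k => //= len IH k.
by rewrite IH andbT; case: (odd k).
Qed.

Lemma alternating_iota_edges (T : finType) (c : coloring T 2) (edge : nat -> {set T}) b k len :
  (forall t, k <= t < k + len -> c (edge t) = bcol (b (+) odd t)) ->
  sorted [rel E F | c E != c F] [seq edge t | t <- iota k len].
Proof.
move=> col_edge; rewrite sorted_map.
apply: (sub_in_sorted (P := [in iota k len])) (sorted_iota_odd k len); last exact/allP.
move=> t u; rewrite !mem_iota => t_in u_in /= odd_neq.
rewrite !col_edge // bcol_eq {col_edge}.
by move: odd_neq; case: (odd t); case: (odd u); case: b.
Qed.

Lemma two_iota_paths_proper_S_trees (T : finType) (c : coloring T 2) (S : {set T})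
    (f1 f2 : nat -> T) k1 len1 k2 len2 b1 b2 :
  {in iota k1 len1.+1 &, injective f1} -> {in iota k2 len2.+1 &, injective f2} ->
  (forall t, k1 <= t < k1 + len1 -> c [set f1 t; f1 t.+1] = bcol (b1 (+) odd t)) ->
  (forall t, k2 <= t < k2 + len2 -> c [set f2 t; f2 t.+1] = bcol (b2 (+) odd t)) ->
  [disjoint [seq [set f1 t; f1 t.+1] | t <- iota k1 len1]
          & [seq [set f2 t; f2 t.+1] | t <- iota k2 len2]] ->
  [set z in [seq f1 t | t <- iota k1 len1.+1]] :&:
    [set z in [seq f2 t | t <- iota k2 len2.+1]] = S ->
  two_proper_S_trees (fun a b : T => a != b) c S.
Proof.
move=> inj1 inj2 col1 col2 disjE defS.
have uniq1 : uniq (f1 k1 :: map f1 (iota k1.+1 len1)).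
  by rewrite -[_ :: _]/(map f1 (iota k1 len1.+1)) map_inj_in_uniq ?iota_uniq.
have uniq2 : uniq (f2 k2 :: map f2 (iota k2.+1 len2)).
  by rewrite -[_ :: _]/(map f2 (iota k2 len2.+1)) map_inj_in_uniq ?iota_uniq.
apply: (two_proper_S_trees_intro (H1 := path_graph (f1 k1) (map f1 (iota k1.+1 len1)))
                                 (H2 := path_graph (f2 k2) (map f2 (iota k2.+1 len2)))) defS.
- apply: path_graph_proper_tree uniq1 (uniq_path_neq uniq1) _.
  by rewrite (path_edges_map_iota f1); apply: alternating_iota_edges col1.
- apply: path_graph_proper_tree uniq2 (uniq_path_neq uniq2) _.
  by rewrite (path_edges_map_iota f2); apply: alternating_iota_edges col2.
apply/setP => E; rewrite !inE (path_edges_map_iota f1) (path_edges_map_iota f2).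
by case E_in1 : (E \in _) => //=; exact: disjointFr disjE E_in1.
Qed.

Lemma one_colour_tree_card (T : finType) (adj : rel T) (c : coloring T 1) (H : subgraph T) :
  is_proper_tree adj c H -> #|H.1| <= 2.
Proof.
case: H => V F [[V_n0 _ conn _] proper] /=.
have same_edge E1 E2 : E1 \in F -> E2 \in F -> E1 :&: E2 != set0 -> E1 = E2.
  move=> E1_in E2_in meet; apply/eqP/contraT => neq.
  by have := proper E1 E2 E1_in E2_in neq meet; rewrite !ord1 eqxx.
have shared u w w' : [set u; w] \in F -> [set u; w'] \in F -> w' \in [set u; w].
  move=> uw_in uw'_in; rewrite (same_edge _ _ uw_in uw'_in) ?set22 //.
  by apply/set0Pn; exists u; rewrite !inE !eqxx.
have [x x_in] := set0Pn _ V_n0.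
pose Nx := [set w | [set x; w] \in F].
have Nx_le1 : #|Nx| <= 1.
  apply/card_le1_eqP => u w; rewrite !inE => xu_in xw_in.
  case/set2P: (shared _ _ _ xu_in xw_in) => // w_x.
  by move: (shared _ _ _ xw_in xu_in); rewrite w_x setUid inE => /eqP.
have closed_Nx : closed (fun a b => [set a; b] \in F) (x |: Nx).
  apply: intro_closed; first exact: edge_connect_sym.
  move=> u w uw_in; rewrite !inE => /predU1P [u_x | xu_in]; first by rewrite -u_x uw_in orbT.
  have ux_in : [set u; x] \in F by rewrite setUC.
  by case/set2P: (shared _ _ _ ux_in uw_in) => ->; rewrite ?eqxx ?xu_in ?orbT.
have V_sub : V \subset x |: Nx.
  by apply/subsetP => w w_in; rewrite -(closed_connect closed_Nx (conn x w x_in w_in)) setU11.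
apply: leq_trans (subset_leq_card V_sub) _.
by rewrite cardsU1 (leq_add (leq_b1 _) Nx_le1).
Qed.

Lemma kl_proper_colours_gt1 (T : finType) (adj : rel T) k l m (c : coloring T m) (S : {set T}) :
  #|S| = k -> 2 < k -> 0 < l -> kl_proper adj k l c -> 1 < m.
Proof.
move=> S_card k_gt2 l_gt0; case: m c => [|[|m]] c // c_proper; first by case: (c set0).
have [Ts [Ts_ok _]] := c_proper S S_card.
have [[_ S_sub] proper] := Ts_ok (Ordinal l_gt0).
by have := leq_trans (subset_leq_card S_sub) (one_colour_tree_card proper); rewrite S_card leqNgt k_gt2.
Qed.
Section Zigzag.
Variable N : nat.

(* [x %% N] for [x < 2 * N], in a form [lia] can reason about *)
Definition wrap x := if x < N then x else x - N.

(* The [t]-th vertex of the zigzag [a, a + 1, a - 1, a + 2, a - 2, ...] through Z_N. *)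
Definition zig a t := if odd t then wrap (a + t.+1 %/ 2) else wrap (a + N - t %/ 2).

Lemma wrap_lt x : x < N.*2 -> wrap x < N.
Proof. rewrite /wrap; case: ifP; lia. Qed.

Lemma zig_lt a t : a < N -> t < N -> zig a t < N.
Proof. rewrite /zig /wrap => a_lt t_lt; case: ifP => _; case: ifP; lia. Qed.

Lemma zig0 a : a < N -> zig a 0 = a.
Proof. rewrite /zig /wrap /= => a_lt; case: ifP; lia. Qed.

Hypotheses (N_gt3 : 3 < N) (N_even : ~~ odd N).

Lemma zig_inj a t t' : a < N -> t < N -> t' < N -> zig a t = zig a t' -> t = t'.
Proof.
rewrite /zig /wrap => a_lt t_lt t'_lt.
by case: (boolP (odd t)) => ?; case: (boolP (odd t')) => ?; case: ifP; case: ifP; lia.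
Qed.

Lemma odd_zig_sum a t : a < N -> t.+1 < N -> odd (zig a t + zig a t.+1) = ~~ odd t.
Proof.
rewrite /zig /wrap /= => a_lt t_lt.
by case: (boolP (odd t)) => ? /=; case: ifP; case: ifP; lia.
Qed.

Lemma zig_sum_mod a t : a < N -> t.+1 < N ->
  let s := zig a t + zig a t.+1 in let b := ~~ odd t in
  [\/ s + N = 2 * a + b, s = 2 * a + b | s = 2 * a + b + N].
Proof.
rewrite /zig /wrap /= => a_lt t_lt.
case: (boolP (odd t)) => ? /=; case: ifP; case: ifP;
  first [by constructor 1; lia | by constructor 2; lia | by constructor 3; lia].
Qed.

Lemma zig_sum_succ_neq a t t' : a < N -> t.+1 < N -> t'.+1 < N ->
  zig a t + zig a t.+1 != zig (wrap a.+1) t' + zig (wrap a.+1) t'.+1.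
Proof.
move=> a_lt t_lt t'_lt; have a'_lt : wrap a.+1 < N by apply: wrap_lt; lia.
case: (zig_sum_mod a_lt t_lt) => /= e; case: (zig_sum_mod a'_lt t'_lt) => /= e';
move: e e'; rewrite /wrap; case: ifP => ?;
case: (boolP (odd t)) => ?; case: (boolP (odd t')) => ? /=; lia.
Qed.

Lemma zig_uniq a : a < N -> uniq [seq zig a t | t <- iota 0 N].
Proof.
move=> a_lt; rewrite map_inj_in_uniq ?iota_uniq // => t t'; rewrite !mem_iota.
exact: zig_inj.
Qed.

Lemma mem_zig a x : a < N -> (x \in [seq zig a t | t <- iota 0 N]) = (x < N).
Proof.
move=> a_lt.
have sub : {subset [seq zig a t | t <- iota 0 N] <= iota 0 N}.
  by move=> y /mapP [t]; rewrite !mem_iota => t_lt ->; apply: zig_lt.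
have [|_ eq_zig] := uniq_min_size (zig_uniq a_lt) sub; first by rewrite size_map.
by rewrite eq_zig mem_iota.
Qed.

Lemma mem_behead_zig a x : a < N ->
  (x \in [seq zig a t | t <- iota 1 N.-1]) = (x < N) && (x != a).
Proof.
move=> a_lt; have iotaS : iota 0 N = 0 :: iota 1 N.-1 by case: N N_gt3.
have := zig_uniq a_lt; have := mem_zig x a_lt; rewrite iotaS /= zig0 // in_cons.
case: eqVneq => [-> _ /andP [/negbTE -> _] | _ /= -> _]; by rewrite ?eqxx ?andbF ?andbT.
Qed.

Lemma zig_last_neq_succ a : a < N -> zig a N.-1 != wrap a.+1.
Proof.
move=> a_lt; rewrite /zig /wrap.
have -> : odd N.-1 by case: N N_gt3 N_even => [|[|k]] //= _; rewrite negbK.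
by case: ifP; case: ifP; lia.
Qed.

End Zigzag.

Section CompleteGraphColouring.
Variable m : nat.
Hypothesis m_gt2 : 2 < m.
Local Notation n := m.+1.

(* The zigzags live on the vertices below [Nc]; for odd [n] the vertex [ord_max] is left over. *)
Definition Nc := if odd m then n else m.

Lemma Nc_gt3 : 3 < Nc.
Proof. by rewrite /Nc; case: ifP; lia. Qed.

Lemma Nc_even : ~~ odd Nc.
Proof. by rewrite /Nc; case: ifP => //= ->. Qed.

Lemma Nc_le : Nc <= n.
Proof. by rewrite /Nc; case: ifP. Qed.

Lemma Nc_even_order : odd m -> Nc = n.
Proof. by rewrite /Nc => ->. Qed.

Lemma Nc_odd_order : ~~ odd m -> Nc = m.
Proof. by rewrite /Nc => /negbTE ->. Qed.

Definition vz a t : 'I_n := inord (zig Nc a t).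

Definition esum (E : {set 'I_n}) := \sum_(x in E) (x : nat).

Definition col (E : {set 'I_n}) : 'I_2 :=
  bcol ((odd m || (ord_max \notin E)) && odd (esum E)).

Lemma esum2 (x y : 'I_n) : x != y -> esum [set x; y] = x + y.
Proof. by move=> neq_xy; rewrite /esum big_setU1 ?big_set1 // inE. Qed.

Lemma vz_val a t : a < Nc -> t < Nc -> vz a t = zig Nc a t :> nat.
Proof.
move=> a_lt t_lt; rewrite /vz inordK //.
exact: leq_trans (zig_lt a_lt t_lt) Nc_le.
Qed.

Lemma vz_inj a t t' : a < Nc -> t < Nc -> t' < Nc -> vz a t = vz a t' -> t = t'.
Proof.
move=> a_lt t_lt t'_lt /(congr1 val); rewrite /= !vz_val //.
exact: (zig_inj (N := Nc) Nc_gt3 Nc_even a_lt t_lt t'_lt).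
Qed.

Lemma vz_succ_neq a t : a < Nc -> t.+1 < Nc -> vz a t != vz a t.+1.
Proof. by move=> a_lt t_lt; apply/eqP => /(vz_inj a_lt (ltnW t_lt) t_lt); lia. Qed.

Lemma vz_neq_max a t : ~~ odd m -> a < Nc -> t < Nc -> vz a t != ord_max.
Proof.
move=> m_even a_lt t_lt; apply/eqP => /(congr1 val); rewrite /= vz_val //.
by have := zig_lt a_lt t_lt; rewrite Nc_odd_order //; lia.
Qed.

Lemma max_notin_vz_edge a t :
  ~~ odd m -> a < Nc -> t.+1 < Nc -> ord_max \notin [set vz a t; vz a t.+1].
Proof.
move=> m_even a_lt t_lt; rewrite !inE !(eq_sym ord_max).
by rewrite !(negbTE (vz_neq_max m_even a_lt _)) ?(ltnW t_lt).
Qed.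

Lemma col_vz a t : a < Nc -> t.+1 < Nc -> col [set vz a t; vz a t.+1] = bcol (~~ odd t).
Proof.
move=> a_lt t_lt; rewrite /col esum2 ?vz_succ_neq // !vz_val ?(ltnW t_lt) //.
rewrite odd_zig_sum ?Nc_gt3 ?Nc_even //; case: (boolP (odd m)) => //= m_even.
by rewrite max_notin_vz_edge.
Qed.

Lemma col_max x : ~~ odd m -> col [set x; ord_max] = bcol false.
Proof. by move=> m_even; rewrite /col (negbTE m_even) set22. Qed.

Lemma vz_edge_neq_succ a t t' : a < Nc -> t.+1 < Nc -> t'.+1 < Nc ->
  [set vz a t; vz a t.+1] != [set vz (wrap Nc a.+1) t'; vz (wrap Nc a.+1) t'.+1].
Proof.
move=> a_lt t_lt t'_lt.
have a'_lt : wrap Nc a.+1 < Nc by apply: wrap_lt; have := Nc_gt3; lia.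
apply/eqP => /(congr1 esum); rewrite !esum2 ?vz_succ_neq // !vz_val ?(ltnW t_lt) ?(ltnW t'_lt) //.
exact/eqP/(zig_sum_succ_neq Nc_gt3 Nc_even a_lt t_lt t'_lt).
Qed.

Lemma ltn_max (z : 'I_n) : (z < m) = (z != ord_max).
Proof. by rewrite ltn_neqAle -ltnS ltn_ord andbT. Qed.

Lemma vz_inj_in a k len : a < Nc -> k + len <= Nc -> {in iota k len &, injective (vz a)}.
Proof. by move=> a_lt kl_le t t'; rewrite !mem_iota => t_in t'_in; apply: vz_inj; lia. Qed.

Lemma mem_map_vz a k len (z : 'I_n) : a < Nc -> k + len <= Nc ->
  (z \in [seq vz a t | t <- iota k len]) = (val z \in [seq zig Nc a t | t <- iota k len]).
Proof.
move=> a_lt kl_le; apply/mapP/mapP => [] [t t_in z_eq]; exists t => //;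
  move: t_in; rewrite mem_iota => t_in.
  by rewrite z_eq /= vz_val //; lia.
by apply: val_inj; rewrite /= vz_val //; lia.
Qed.

Lemma mem_vz a (z : 'I_n) : a < Nc -> (z \in [seq vz a t | t <- iota 0 Nc]) = (z < Nc).
Proof. by move=> a_lt; rewrite mem_map_vz // (mem_zig Nc_gt3 Nc_even). Qed.

Lemma mem_behead_vz a (z : 'I_n) : a < Nc ->
  (z \in [seq vz a t | t <- iota 1 Nc.-1]) = (z < Nc) && (val z != a).
Proof.
have Nc_gt3 := Nc_gt3; move=> a_lt.
by rewrite mem_map_vz ?(mem_behead_zig Nc_gt3 Nc_even) //; lia.
Qed.

Lemma vz_edges_disjoint a k len k' len' : a < Nc -> k + len < Nc -> k' + len' < Nc ->
  [disjoint [seq [set vz a t; vz a t.+1] | t <- iota k len]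
          & [seq [set vz (wrap Nc a.+1) t; vz (wrap Nc a.+1) t.+1] | t <- iota k' len']].
Proof.
move=> a_lt kl_lt kl'_lt; rewrite disjoint_has; apply/hasPn => _ /mapP [t t_in ->].
apply/negP => /mapP [t' t'_in] /eqP; apply/negP.
by move: t_in t'_in; rewrite !mem_iota => t_in t'_in; apply: vz_edge_neq_succ; lia.
Qed.

Lemma two_trees_even_order v :
  odd m -> two_proper_S_trees (fun a b : 'I_n => a != b) col [set~ v].
Proof.
move=> /Nc_even_order Nc_n.
have Nc_gt3 := Nc_gt3.
have v_lt : v < Nc by rewrite Nc_n.
have a_lt : wrap Nc v.+1 < Nc by apply: wrap_lt; lia.
apply: (two_iota_paths_proper_S_trees (b1 := true) (b2 := true)
          (f1 := vz v) (k1 := 1) (len1 := Nc - 2)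
          (f2 := vz (wrap Nc v.+1)) (k2 := 0) (len2 := Nc - 1)).
- by apply: vz_inj_in; lia.
- by apply: vz_inj_in; lia.
- by move=> t t_in; apply: col_vz; lia.
- by move=> t t_in; apply: col_vz; lia.
- by apply: vz_edges_disjoint; lia.
apply/setP => z; rewrite in_setC1 in_setI !in_set.
have -> : (Nc - 2).+1 = Nc.-1 by lia.
have -> : (Nc - 1).+1 = Nc by lia.
by rewrite mem_behead_vz // mem_vz // Nc_n ltn_ord andbT val_eqE.
Qed.

Lemma two_trees_odd_order_max :
  ~~ odd m -> two_proper_S_trees (fun a b : 'I_n => a != b) col [set~ ord_max].
Proof.
move=> /Nc_odd_order Nc_m.
have Nc_gt3 := Nc_gt3.
have a_lt : wrap Nc 1 < Nc by apply: wrap_lt; lia.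
apply: (two_iota_paths_proper_S_trees (b1 := true) (b2 := true)
          (f1 := vz 0) (k1 := 0) (len1 := Nc - 1)
          (f2 := vz (wrap Nc 1)) (k2 := 0) (len2 := Nc - 1)).
- by apply: vz_inj_in; lia.
- by apply: vz_inj_in; lia.
- by move=> t t_in; apply: col_vz; lia.
- by move=> t t_in; apply: col_vz; lia.
- by apply: vz_edges_disjoint; lia.
apply/setP => z; rewrite in_setC1 in_setI !in_set.
have -> : (Nc - 1).+1 = Nc by lia.
rewrite !mem_vz ?andbb //; last lia.
by rewrite Nc_m ltn_max.
Qed.

Lemma vz_last_neq_succ a : a < Nc -> vz a Nc.-1 != vz (wrap Nc a.+1) 0.
Proof.
have Nc_gt3 := Nc_gt3; move=> a_lt.
have a'_lt : wrap Nc a.+1 < Nc by apply: wrap_lt; lia.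
by rewrite -val_eqE /= !vz_val ?(zig0 a'_lt) ?(zig_last_neq_succ Nc_gt3 Nc_even) //; lia.
Qed.

Definition vz_then_max a t : 'I_n := if t < Nc then vz a t else ord_max.

Definition max_then_vz a t : 'I_n := if t is t'.+1 then vz a t' else ord_max.

Lemma mem_vz_then_max a (z : 'I_n) : a < Nc ->
  (z \in [seq vz_then_max a t | t <- iota 1 Nc]) =
  (z == ord_max) || (z \in [seq vz a t | t <- iota 1 Nc.-1]).
Proof.
have Nc_gt3 := Nc_gt3; move=> a_lt.
have -> : iota 1 Nc = rcons (iota 1 Nc.-1) (1 + Nc.-1).
  by rewrite -cats1 -[[:: _]]/(iota (1 + Nc.-1) 1) -iotaD addn1 prednK //; lia.
rewrite map_rcons mem_rcons in_cons {1}/vz_then_max ifF; last lia.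
congr (_ || (z \in _)); apply/eq_in_map => t; rewrite mem_iota /vz_then_max => t_in.
by rewrite ifT //; lia.
Qed.

Lemma mem_max_then_vz a (z : 'I_n) :
  (z \in [seq max_then_vz a t | t <- iota 0 Nc.+1]) =
  (z == ord_max) || (z \in [seq vz a t | t <- iota 0 Nc]).
Proof. by rewrite /= in_cons -[iota 1 Nc]/(iota (1 + 0) Nc) iotaDl -map_comp. Qed.

Lemma vz_then_max_inj v : ~~ odd m -> v < Nc -> {in iota 1 Nc &, injective (vz_then_max v)}.
Proof.
move=> m_even v_lt t t'; rewrite !mem_iota /vz_then_max => t_in t'_in.
case: ifP => t_lt; case: ifP => t'_lt.
- exact: vz_inj.
- by move/eqP; rewrite (negbTE (vz_neq_max m_even v_lt t_lt)).
- by move/eqP; rewrite eq_sym (negbTE (vz_neq_max m_even v_lt t'_lt)).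
- lia.
Qed.

Lemma max_then_vz_inj a :
  ~~ odd m -> a < Nc -> {in iota 0 Nc.+1 &, injective (max_then_vz a)}.
Proof.
move=> m_even a_lt [|t] [|t']; rewrite !mem_iota /max_then_vz => t_in t'_in //.
- by move/eqP; rewrite eq_sym (negbTE (vz_neq_max m_even a_lt _)) //; lia.
- by move/eqP; rewrite (negbTE (vz_neq_max m_even a_lt _)) //; lia.
- by move/vz_inj => -> //; lia.
Qed.

Lemma col_vz_then_max v t : ~~ odd m -> v < Nc -> 0 < t < Nc ->
  col [set vz_then_max v t; vz_then_max v t.+1] = bcol (~~ odd t).
Proof.
move=> m_even v_lt t_in; rewrite /vz_then_max ifT; last lia.
case: ltnP => [t_lt | t_ge]; first exact: col_vz.
have Nc_even := Nc_even; have odd_t : odd t by rewrite (_ : Nc = t.+1) /= in Nc_even; lia.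
by rewrite col_max // odd_t.
Qed.

Lemma col_max_then_vz a t : ~~ odd m -> a < Nc -> t < Nc ->
  col [set max_then_vz a t; max_then_vz a t.+1] = bcol (odd t).
Proof.
by move=> m_even a_lt; case: t => [|t] t_lt /=; [rewrite setUC col_max | apply: col_vz].
Qed.

Lemma vz_then_max_edges_disjoint v : ~~ odd m -> v < Nc ->
  [disjoint [seq [set vz_then_max v t; vz_then_max v t.+1] | t <- iota 1 (Nc - 1)]
          & [seq [set max_then_vz (wrap Nc v.+1) t; max_then_vz (wrap Nc v.+1) t.+1]
               | t <- iota 0 Nc]].
Proof.
move=> m_even v_lt; have Nc_gt3 := Nc_gt3.
have a_lt : wrap Nc v.+1 < Nc by apply: wrap_lt; lia.
rewrite disjoint_has; apply/hasPn => _ /mapP [t t_in ->].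
rewrite mem_iota in t_in; rewrite /vz_then_max ifT; last lia.
apply/negP => /mapP [t' t'_in] /eqP; apply/negP; rewrite mem_iota in t'_in.
case: t' t'_in => [|t'] t'_in /=; case: ifP => t_lt.
- apply/eqP => /setP/(_ ord_max).
  by rewrite set21 (negbTE (max_notin_vz_edge m_even v_lt t_lt)).
- have -> : t = Nc.-1 by lia.
  apply/eqP => /setP/(_ (vz v Nc.-1)).
  by rewrite set21 !inE (negbTE (vz_neq_max m_even v_lt _)) ?(negbTE (vz_last_neq_succ v_lt)) //; lia.
- by apply: vz_edge_neq_succ; lia.
- apply/eqP => /setP/(_ ord_max).
  by rewrite set22 (negbTE (max_notin_vz_edge m_even a_lt _)) //; lia.
Qed.

Lemma two_trees_odd_order v :
  ~~ odd m -> v != ord_max -> two_proper_S_trees (fun a b : 'I_n => a != b) col [set~ v].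
Proof.
move=> m_even v_max; have Nc_gt3 := Nc_gt3.
have v_lt : v < Nc by rewrite Nc_odd_order // ltn_max.
have a_lt : wrap Nc v.+1 < Nc by apply: wrap_lt; lia.
apply: (two_iota_paths_proper_S_trees (b1 := true) (b2 := false)
          (f1 := vz_then_max v) (k1 := 1) (len1 := Nc - 1)
          (f2 := max_then_vz (wrap Nc v.+1)) (k2 := 0) (len2 := Nc)).
- by rewrite (_ : (Nc - 1).+1 = Nc); [apply: vz_then_max_inj | lia].
- exact: max_then_vz_inj.
- by move=> t t_in; apply: col_vz_then_max => //; lia.
- by move=> t t_in; apply: col_max_then_vz => //; lia.
- exact: vz_then_max_edges_disjoint.
apply/setP => z; rewrite in_setC1 in_setI !in_set.
have -> : (Nc - 1).+1 = Nc by lia.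
rewrite mem_vz_then_max // mem_behead_vz // mem_max_then_vz mem_vz // Nc_odd_order // ltn_max.
case: eqVneq => [-> | _] /=; last by rewrite andbT val_eqE.
by rewrite eq_sym v_max.
Qed.

Lemma kl_proper_col : kl_proper (@Kadj n) (n - 1) 2 col.
Proof.
move=> S S_card.
have [v ->] : exists v, S = [set~ v].
  have /cards1P [v Sv] : #|~: S| == 1.
    by rewrite cardsCs setCK card_ord S_card subn1 /= subSnn.
  by exists v; rewrite -Sv setCK.
case: (boolP (odd m)) => [m_odd | m_even]; first exact: two_trees_even_order.
case: (eqVneq v ord_max) => [-> | v_max]; first exact: two_trees_odd_order_max.
exact: two_trees_odd_order.
Qed.

End CompleteGraphColouring.

Theorem theorem2p5 (n : nat) : 4 <= n -> px_is (@Kadj n) (n - 1) 2 2.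
Proof.
case: n => [|m] // m_gt2; split; first by exists (@col m); exact: kl_proper_col.
move=> k c c_proper.
apply: (kl_proper_colours_gt1 (S := [set~ ord0]) _ _ _ c_proper) => //.
  by rewrite cardsC1 card_ord subn1.
by rewrite subn1.
Qed.
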